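(* Let $\mathcal V$ be braided monoidal closed, $H$ a Hopf $\mathcal V$-category with invertible antipode $s$, and $t$ a non-singular left integral family for $H$. Let $x\in X$ and let $f_x,g_x\colon H_{x,x}\to I$ be morphisms such that $$(1\otimes f_x)\circ\delta_{xx}\circ t^{xx}=j_x\quad\text{and}\quad (g_x\otimes1)\circ\delta_{xx}\circ t^{xx}=j_x .$$ Then $g_x=f_x\circ s_{xx}^{-1}$. In particular, if $\bar p_x$ is a right inverse of $p_{xx}$ and $\bar q_x$ a right inverse of $q_{xx}$, then $$\mathrm{ev}_{xx}\circ(\bar p_x\otimes1)\circ(j_x\otimes1)=\mathrm{ev}_{xx}\circ\sigma_{H_{x,x},H^*_{x,x}}\circ(1\otimes\bar q_x)\circ(1\otimes j_x)\circ s_{xx}^{-1}\colon H_{x,x}\to I.$$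
   Context: $\mathcal V$ is a braided monoidal category with tensor $\otimes$, unit $I$, braiding $\sigma$ (unit constraints suppressed), which is closed; $A^*_{x,y}:=[A_{x,y},I]$ with evaluation $\mathrm{ev}_{xy}\colon A^*_{x,y}\otimes A_{x,y}\to I$. A $\mathcal V$-category $A$ with object set $X$ has objects $A_{x,y}$, compositions $m_{xyz}\colon A_{x,y}\otimes A_{y,z}\to A_{x,z}$, units $j_x\colon I\to A_{x,x}$, associative and unital. Semi-Hopf: each $A_{x,y}$ is a comonoid $(\delta_{xy},\epsilon_{xy})$ and all $m_{xyz},j_x$ are comonoid morphisms. Hopf: there are $s_{xy}\colon A_{x,y}\to A_{y,x}$ with $m_{xyx}\circ(1\otimes s_{xy})\circ\delta_{xy}=j_x\circ\epsilon_{xy}$ and $m_{yxy}\circ(s_{xy}\otimes1)\circ\delta_{xy}=j_y\circ\epsilon_{xy}$; invertible antipode means each $s_{xy}$ is an isomorphism. Left integral family: $t^{xy}\colon I\to A_{x,y}$ with $m_{zxy}\circ(1\otimes t^{xy})=t^{zy}\circ\epsilon_{zx}$ for all $x,y,z$. For such $t$: $p_{xy}:=(\mathrm{ev}_{xy}\otimes1)\circ(1\otimes\delta_{xy})\circ(1\otimes t^{xy})\colon A^*_{x,y}\to A_{x,y}$ and $q_{xy}:=(1\otimes\mathrm{ev}_{xy})\circ(1\otimes\sigma_{A_{x,y},A^*_{x,y}})\circ(\delta_{xy}\otimes1)\circ(t^{xy}\otimes1)\colon A^*_{x,y}\to A_{x,y}$. $t$ is non-singular if all $p_{xx}$ and all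 $q_{xx}$ ($x\in X$) are split epimorphisms. *)

(* Hom-sets carry Leibniz equality. *)
Set Implicit Arguments.
Unset Strict Implicit.

Record Cat := {
  Ob :> Type;
  Hom : Ob -> Ob -> Type;
  cmp : forall a b c : Ob, Hom b c -> Hom a b -> Hom a c;
  idm : forall a : Ob, Hom a a }.
Arguments cmp {_ _ _ _} _ _.
Arguments idm {_} _.
Arguments Hom : clear implicits.

Record CatAx (C : Cat) : Prop := {
  cmpA : forall a b c d (f : Hom C c d) (g : Hom C b c) (h : Hom C a b),
      cmp f (cmp g h) = cmp (cmp f g) h;
  cmp1l : forall a b (f : Hom C a b), cmp (idm b) f = f;
  cmp1r : forall a b (f : Hom C a b), cmp f (idm a) = f }.

Record MonData (C : Cat) := {
  tens : C -> C -> C;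
  tensm : forall a b c d : C, Hom C a b -> Hom C c d -> Hom C (tens a c) (tens b d);
  unitI : C;
  alpha : forall a b c : C, Hom C (tens (tens a b) c) (tens a (tens b c));
  alphainv : forall a b c : C, Hom C (tens a (tens b c)) (tens (tens a b) c);
  lam : forall a : C, Hom C (tens unitI a) a;
  laminv : forall a : C, Hom C a (tens unitI a);
  rho : forall a : C, Hom C (tens a unitI) a;
  rhoinv : forall a : C, Hom C a (tens a unitI);
  braid : forall a b : C, Hom C (tens a b) (tens b a);
  braidinv : forall a b : C, Hom C (tens b a) (tens a b) }.
Arguments tensm {_} _ {_ _ _ _} _ _.

Record ClosedData (C : Cat) (M : MonData C) := {
  ihom : C -> C -> C;
  ev : forall b c : C, Hom C (tens M (ihom b c) b) c;
  cur : forall a b c : C, Hom C (tens M a b) c -> Hom C a (ihom b c) }.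

Section BMCAxSec.
Variables (C : Cat) (M : MonData C) (K : ClosedData M).
Local Notation "g ∘ f" := (cmp g f) (at level 40, left associativity).
Local Notation "a ⊗ b" := (tens M a b) (at level 30, right associativity).
Local Notation "f ⊠ g" := (tensm M f g) (at level 35, right associativity).
Local Notation α := (alpha M).
Local Notation α' := (alphainv M).
Local Notation σ := (braid M).
Local Notation I := (unitI M).

Record BMCAx : Prop := {
  tensm_id : forall a b : C, idm a ⊠ idm b = idm (a ⊗ b);
  tensm_cmp : forall a b c a' b' c' (f : Hom C a b) (f' : Hom C b c)
      (g : Hom C a' b') (g' : Hom C b' c'), (f' ∘ f) ⊠ (g' ∘ g) = (f' ⊠ g') ∘ (f ⊠ g);
  alpha_iso1 : forall a b c, α' a b c ∘ α a b c = idm _;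
  alpha_iso2 : forall a b c, α a b c ∘ α' a b c = idm _;
  alpha_nat : forall a b c a' b' c' (f : Hom C a a') (g : Hom C b b') (h : Hom C c c'),
      α a' b' c' ∘ ((f ⊠ g) ⊠ h) = (f ⊠ (g ⊠ h)) ∘ α a b c;
  lam_iso1 : forall a, laminv M a ∘ lam M a = idm _;
  lam_iso2 : forall a, lam M a ∘ laminv M a = idm _;
  lam_nat : forall a b (f : Hom C a b), lam M b ∘ (idm I ⊠ f) = f ∘ lam M a;
  rho_iso1 : forall a, rhoinv M a ∘ rho M a = idm _;
  rho_iso2 : forall a, rho M a ∘ rhoinv M a = idm _;
  rho_nat : forall a b (f : Hom C a b), rho M b ∘ (f ⊠ idm I) = f ∘ rho M a;
  pentagon : forall a b c d,
      (idm a ⊠ α b c d) ∘ α a (b ⊗ c) d ∘ (α a b c ⊠ idm d)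
      = α a b (c ⊗ d) ∘ α (a ⊗ b) c d;
  triangle : forall a b, (idm a ⊠ lam M b) ∘ α a I b = rho M a ⊠ idm b;
  braid_iso1 : forall a b, braidinv M a b ∘ σ a b = idm _;
  braid_iso2 : forall a b, σ a b ∘ braidinv M a b = idm _;
  braid_nat : forall a b a' b' (f : Hom C a a') (g : Hom C b b'),
      σ a' b' ∘ (f ⊠ g) = (g ⊠ f) ∘ σ a b;
  hexagon1 : forall a b c,
      α b c a ∘ σ a (b ⊗ c) ∘ α a b c
      = (idm b ⊠ σ a c) ∘ α b a c ∘ (σ a b ⊠ idm c);
  hexagon2 : forall a b c,
      α' c a b ∘ σ (a ⊗ b) c ∘ α' a b c
      = (σ a c ⊠ idm b) ∘ α' a c b ∘ (idm a ⊠ σ b c);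
  ev_cur : forall a b c (f : Hom C (a ⊗ b) c), ev K b c ∘ (cur K f ⊠ idm b) = f;
  cur_uniq : forall a b c (f : Hom C (a ⊗ b) c) (g : Hom C a (ihom K b c)),
      ev K b c ∘ (g ⊠ idm b) = f -> g = cur K f }.
End BMCAxSec.

Record BMC := {
  bcat : Cat;
  bmon : MonData bcat;
  bclo : ClosedData bmon;
  bcatax : CatAx bcat;
  bax : BMCAx bclo }.

Definition vHom {V : BMC} (a b : bcat V) : Type := Hom (bcat V) a b.
Definition vcomp {V : BMC} {a b c : bcat V} (g : vHom b c) (f : vHom a b) : vHom a c :=
  cmp g f.
Definition vid {V : BMC} (a : bcat V) : vHom a a := idm a.
Definition vtens {V : BMC} (a b : bcat V) : bcat V := tens (bmon V) a b.
Definition vtm {V : BMC} {a b c d : bcat V} (f : vHom a b) (g : vHom c d)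
  : vHom (vtens a c) (vtens b d) := tensm (bmon V) f g.
Definition vI (V : BMC) : bcat V := unitI (bmon V).
Definition valpha {V : BMC} (a b c : bcat V) : vHom (vtens (vtens a b) c) (vtens a (vtens b c)) :=
  alpha (bmon V) a b c.
Definition valphainv {V : BMC} (a b c : bcat V) : vHom (vtens a (vtens b c)) (vtens (vtens a b) c) :=
  alphainv (bmon V) a b c.
Definition vlam {V : BMC} (a : bcat V) : vHom (vtens (vI V) a) a := lam (bmon V) a.
Definition vlaminv {V : BMC} (a : bcat V) : vHom a (vtens (vI V) a) := laminv (bmon V) a.
Definition vrho {V : BMC} (a : bcat V) : vHom (vtens a (vI V)) a := rho (bmon V) a.
Definition vrhoinv {V : BMC} (a : bcat V) : vHom a (vtens a (vI V)) := rhoinv (bmon V) a.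
Definition vbraid {V : BMC} (a b : bcat V) : vHom (vtens a b) (vtens b a) := braid (bmon V) a b.
Definition vdual {V : BMC} (a : bcat V) : bcat V := ihom (bclo V) a (vI V).
Definition vev {V : BMC} (a : bcat V) : vHom (vtens (vdual a) a) (vI V) :=
  ev (bclo V) a (vI V).

Notation "g ∘ f" := (vcomp g f) (at level 40, left associativity).
Notation "a ⊗ b" := (vtens a b) (at level 30, right associativity).
Notation "f ⊠ g" := (vtm f g) (at level 35, right associativity).

Definition vmid {V : BMC} (a b c d : bcat V) : vHom ((a ⊗ b) ⊗ (c ⊗ d)) ((a ⊗ c) ⊗ (b ⊗ d)) :=
  valphainv a c (b ⊗ d)
  ∘ (vid a ⊠ (valpha c b d ∘ (vbraid b c ⊠ vid d) ∘ valphainv b c d))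
  ∘ valpha a b (c ⊗ d).

Record HopfData (V : BMC) := {
  hX : Type;
  hA : hX -> hX -> bcat V;
  hm : forall x y z : hX, vHom (hA x y ⊗ hA y z) (hA x z);
  hj : forall x : hX, vHom (vI V) (hA x x);
  hdelta : forall x y : hX, vHom (hA x y) (hA x y ⊗ hA x y);
  heps : forall x y : hX, vHom (hA x y) (vI V);
  hs : forall x y : hX, vHom (hA x y) (hA y x) }.
Arguments hA {V} _ x y.
Arguments hm {V} _ x y z.
Arguments hj {V} _ x.
Arguments hdelta {V} _ x y.
Arguments heps {V} _ x y.
Arguments hs {V} _ x y.

Section HopfDefs.
Variables (V : BMC) (H : HopfData V).
Local Notation A := (hA H).
Local Notation m := (hm H).
Local Notation j := (hj H).
Local Notation δ := (hdelta H).
Local Notation ε := (heps H).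
Local Notation s := (hs H).

Definition is_Vcategory : Prop :=
  (forall w x y z : hX H,
      m w y z ∘ (m w x y ⊠ vid (A y z))
      = m w x z ∘ (vid (A w x) ⊠ m x y z) ∘ valpha (A w x) (A x y) (A y z))
  /\ (forall x y : hX H, m x x y ∘ (j x ⊠ vid (A x y)) = vlam (A x y))
  /\ (forall x y : hX H, m x y y ∘ (vid (A x y) ⊠ j y) = vrho (A x y)).

Definition is_semi_Hopf : Prop :=
  (forall x y : hX H,
      valpha (A x y) (A x y) (A x y) ∘ (δ x y ⊠ vid (A x y)) ∘ δ x y
      = (vid (A x y) ⊠ δ x y) ∘ δ x y)
  /\ (forall x y : hX H, vlam (A x y) ∘ (ε x y ⊠ vid (A x y)) ∘ δ x y = vid (A x y))
  /\ (forall x y : hX H, vrho (A x y) ∘ (vid (A x y) ⊠ ε x y) ∘ δ x y = vid (A x y))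
  /\ (forall x y z : hX H,
      δ x z ∘ m x y z
      = (m x y z ⊠ m x y z) ∘ vmid (A x y) (A x y) (A y z) (A y z) ∘ (δ x y ⊠ δ y z))
  /\ (forall x y z : hX H, ε x z ∘ m x y z = vlam (vI V) ∘ (ε x y ⊠ ε y z))
  /\ (forall x : hX H, δ x x ∘ j x = (j x ⊠ j x) ∘ vlaminv (vI V))
  /\ (forall x : hX H, ε x x ∘ j x = vid (vI V)).

Definition is_antipode : Prop :=
  forall x y : hX H,
    m x y x ∘ (vid (A x y) ⊠ s x y) ∘ δ x y = j x ∘ ε x y
    /\ m y x y ∘ (s x y ⊠ vid (A x y)) ∘ δ x y = j y ∘ ε x y.

Definition is_Hopf_Vcategory : Prop := is_Vcategory /\ is_semi_Hopf /\ is_antipode.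

Definition is_antipode_inverse (sinv : forall x y : hX H, vHom (A y x) (A x y)) : Prop :=
  forall x y : hX H, s x y ∘ sinv x y = vid (A y x) /\ sinv x y ∘ s x y = vid (A x y).

Definition left_integral (t : forall x y : hX H, vHom (vI V) (A x y)) : Prop :=
  forall x y z : hX H,
    m z x y ∘ (vid (A z x) ⊠ t x y) ∘ vrhoinv (A z x) = t z y ∘ ε z x.

Definition p_map (t : forall x y : hX H, vHom (vI V) (A x y)) (x y : hX H)
  : vHom (vdual (A x y)) (A x y) :=
  vlam (A x y) ∘ (vev (A x y) ⊠ vid (A x y))
  ∘ valphainv (vdual (A x y)) (A x y) (A x y)
  ∘ (vid (vdual (A x y)) ⊠ δ x y) ∘ (vid (vdual (A x y)) ⊠ t x y)
  ∘ vrhoinv (vdual (A x y)).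

Definition q_map (t : forall x y : hX H, vHom (vI V) (A x y)) (x y : hX H)
  : vHom (vdual (A x y)) (A x y) :=
  vrho (A x y) ∘ (vid (A x y) ⊠ vev (A x y))
  ∘ (vid (A x y) ⊠ vbraid (A x y) (vdual (A x y)))
  ∘ valpha (A x y) (A x y) (vdual (A x y))
  ∘ (δ x y ⊠ vid (vdual (A x y))) ∘ (t x y ⊠ vid (vdual (A x y)))
  ∘ vlaminv (vdual (A x y)).

Definition split_epi {a b : bcat V} (f : vHom a b) : Prop :=
  exists r : vHom b a, f ∘ r = vid b.

Definition non_singular (t : forall x y : hX H, vHom (vI V) (A x y)) : Prop :=
  forall x : hX H, split_epi (p_map t x x) /\ split_epi (q_map t x x).
End HopfDefs.

(* Fix an object x and write A = H_{x,x}; the structure maps at x make A a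
   Hopf monoid in the braided category V.  For a left integral t the key
   identity (in Sweedler notation)

        S(a) t_(1) ⊗ t_(2)  =  t_(1) ⊗ a t_(2)

   follows from "a ⊗ t = a_(1) ⊗ a_(2) t", multiplicativity of δ, the
   antipode law and the (co)unit laws.  Evaluating it against g ⊗ f gives
   g ∘ S = f whenever (1 ⊗ f) δ t = j = (g ⊗ 1) δ t, hence g = f ∘ S⁻¹.
   The second claim is the special case in which f and g are the functionals
   determined by j through right inverses of q and p: on global elements
   φ : I → A^*, the maps q and p act as φ ↦ (1 ⊗ ⟨φ|) δ t and
   φ ↦ (|φ⟩ ⊗ 1) δ t. *)

From Corelib Require Import ssreflect.

Section MonoidalBasics.
Context {V : BMC}.

Lemma assoc {a b c d : bcat V} (h : vHom c d) (g : vHom b c) (f : vHom a b) :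
  (h ∘ g) ∘ f = h ∘ (g ∘ f).
Proof. symmetry. exact (cmpA (bcatax V) h g f). Qed.

Lemma id_l {a b : bcat V} (f : vHom a b) : vid b ∘ f = f.
Proof. exact (cmp1l (bcatax V) f). Qed.

Lemma id_r {a b : bcat V} (f : vHom a b) : f ∘ vid a = f.
Proof. exact (cmp1r (bcatax V) f). Qed.

Lemma tens_id (a b : bcat V) : vid a ⊠ vid b = vid (a ⊗ b).
Proof. exact (tensm_id (bax V) a b). Qed.

Lemma tens_comp {a b c a' b' c' : bcat V} (f : vHom a b) (f' : vHom b c)
  (g : vHom a' b') (g' : vHom b' c') : (f' ∘ f) ⊠ (g' ∘ g) = (f' ⊠ g') ∘ (f ⊠ g).
Proof. exact (tensm_cmp (bax V) f f' g g'). Qed.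

Lemma valpha_nat {a b c a' b' c' : bcat V} (f : vHom a a') (g : vHom b b') (h : vHom c c') :
  valpha a' b' c' ∘ ((f ⊠ g) ⊠ h) = (f ⊠ (g ⊠ h)) ∘ valpha a b c.
Proof. exact (alpha_nat (bax V) f g h). Qed.

Lemma alphaK (a b c : bcat V) : valphainv a b c ∘ valpha a b c = vid _.
Proof. exact (alpha_iso1 (bax V) a b c). Qed.

Lemma alphaVK (a b c : bcat V) : valpha a b c ∘ valphainv a b c = vid _.
Proof. exact (alpha_iso2 (bax V) a b c). Qed.

Lemma lamK (a : bcat V) : vlaminv a ∘ vlam a = vid _.
Proof. exact (lam_iso1 (bax V) a). Qed.

Lemma lamVK (a : bcat V) : vlam a ∘ vlaminv a = vid _.
Proof. exact (lam_iso2 (bax V) a). Qed.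

Lemma rhoK (a : bcat V) : vrhoinv a ∘ vrho a = vid _.
Proof. exact (rho_iso1 (bax V) a). Qed.

Lemma rhoVK (a : bcat V) : vrho a ∘ vrhoinv a = vid _.
Proof. exact (rho_iso2 (bax V) a). Qed.

Lemma braidK (a b : bcat V) : braidinv (bmon V) a b ∘ vbraid a b = vid _.
Proof. exact (braid_iso1 (bax V) a b). Qed.

Lemma vlam_nat {a b : bcat V} (f : vHom a b) : vlam b ∘ (vid (vI V) ⊠ f) = f ∘ vlam a.
Proof. exact (lam_nat (bax V) f). Qed.

Lemma vrho_nat {a b : bcat V} (f : vHom a b) : vrho b ∘ (f ⊠ vid (vI V)) = f ∘ vrho a.
Proof. exact (rho_nat (bax V) f). Qed.

Lemma vbraid_nat {a b a' b' : bcat V} (f : vHom a a') (g : vHom b b') :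
  vbraid a' b' ∘ (f ⊠ g) = (g ⊠ f) ∘ vbraid a b.
Proof. exact (braid_nat (bax V) f g). Qed.

Lemma vtriangle (a b : bcat V) :
  (vid a ⊠ vlam b) ∘ valpha a (vI V) b = vrho a ⊠ vid b.
Proof. exact (triangle (bax V) a b). Qed.

Lemma vpentagon (a b c d : bcat V) :
  (vid a ⊠ valpha b c d) ∘ (valpha a (b ⊗ c) d ∘ (valpha a b c ⊠ vid d))
  = valpha a b (c ⊗ d) ∘ valpha (a ⊗ b) c d.
Proof. rewrite -assoc. exact (pentagon (bax V) a b c d). Qed.

Lemma vhexagon (a b c : bcat V) :
  valpha b c a ∘ (vbraid a (b ⊗ c) ∘ valpha a b c)
  = (vid b ⊠ vbraid a c) ∘ (valpha b a c ∘ (vbraid a b ⊠ vid c)).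
Proof. rewrite -!assoc. exact (hexagon1 (bax V) a b c). Qed.

(* An equation between right-associated composites remains true after
   precomposition; this lets us rewrite inside longer right-associated chains. *)
Lemma chain1 {b c d : bcat V} {p : vHom c d} {q : vHom b c} {r : vHom b d} :
  p ∘ q = r -> forall z (k : vHom z b), p ∘ (q ∘ k) = r ∘ k.
Proof. by move=> E z k; rewrite -E assoc. Qed.

Lemma chain2 {b c d e : bcat V} {p : vHom d e} {q1 : vHom c d} {q2 : vHom b c}
  {r : vHom b e} :
  p ∘ (q1 ∘ q2) = r -> forall z (k : vHom z b), p ∘ (q1 ∘ (q2 ∘ k)) = r ∘ k.
Proof. by move=> E z k; rewrite -E !assoc. Qed.

Lemma chain3 {b c d e f : bcat V} {p : vHom e f} {q1 : vHom d e} {q2 : vHom c d}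
  {q3 : vHom b c} {r : vHom b f} :
  p ∘ (q1 ∘ (q2 ∘ q3)) = r -> forall z (k : vHom z b), p ∘ (q1 ∘ (q2 ∘ (q3 ∘ k))) = r ∘ k.
Proof. by move=> E z k; rewrite -E !assoc. Qed.

Lemma chain4 {b c d e f g : bcat V} {p : vHom f g} {q1 : vHom e f} {q2 : vHom d e}
  {q3 : vHom c d} {q4 : vHom b c} {r : vHom b g} :
  p ∘ (q1 ∘ (q2 ∘ (q3 ∘ q4))) = r ->
  forall z (k : vHom z b), p ∘ (q1 ∘ (q2 ∘ (q3 ∘ (q4 ∘ k)))) = r ∘ k.
Proof. by move=> E z k; rewrite -E !assoc. Qed.

End MonoidalBasics.

(* [arw L] rewrites with the equation L (possibly after instantiating up to six
   arguments) anywhere in a right-associated chain, then re-associates.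
   [arwl]/[arwr] restrict the rewrite to the left/right-hand side. *)
Ltac reassoc := repeat rewrite assoc.
Tactic Notation "arw0" uconstr(L) :=
  first [ rewrite (chain4 L) | rewrite (chain3 L) | rewrite (chain2 L)
        | rewrite (chain1 L) | rewrite L ]; reassoc.
Tactic Notation "arw" uconstr(L) :=
  first [ arw0 L | arw0 (L _) | arw0 (L _ _) | arw0 (L _ _ _) | arw0 (L _ _ _ _)
        | arw0 (L _ _ _ _ _) | arw0 (L _ _ _ _ _ _) ].
Tactic Notation "arwl" uconstr(L) :=
  match goal with |- _ = ?R =>
    let r := fresh "r" in set r := R; arw L; unfold r; clear r end.
Tactic Notation "arwr" uconstr(L) :=
  match goal with |- ?R = _ =>
    let r := fresh "r" in set r := R; arw L; unfold r; clear r end.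

Section Coherence.
Context {V : BMC}.

Lemma iso_cancel_l {a b c : bcat V} {i : vHom b c} {i' : vHom c b} (E : i' ∘ i = vid b)
  {u w : vHom a b} : i ∘ u = i ∘ w -> u = w.
Proof. by move=> F; rewrite -(id_l u) -(id_l w) -E !assoc F. Qed.

Lemma iso_cancel_r {a b c : bcat V} {i : vHom a b} {i' : vHom b a} (E : i ∘ i' = vid b)
  {u w : vHom b c} : u ∘ i = w ∘ i -> u = w.
Proof. by move=> F; rewrite -(id_r u) -(id_r w) -E -!assoc F. Qed.

Lemma valphainv_nat {a b c a' b' c' : bcat V} (f : vHom a a') (g : vHom b b') (h : vHom c c') :
  valphainv a' b' c' ∘ (f ⊠ (g ⊠ h)) = ((f ⊠ g) ⊠ h) ∘ valphainv a b c.
Proof.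
  apply: (iso_cancel_l (alphaK a' b' c')).
  by rewrite -assoc alphaVK id_l -assoc valpha_nat assoc alphaVK id_r.
Qed.

Lemma vlaminv_nat {a b : bcat V} (f : vHom a b) :
  vlaminv b ∘ f = (vid (vI V) ⊠ f) ∘ vlaminv a.
Proof.
  apply: (iso_cancel_l (lamK b)).
  by rewrite -!assoc lamVK id_l vlam_nat assoc lamVK id_r.
Qed.

Lemma vrhoinv_nat {a b : bcat V} (f : vHom a b) :
  vrhoinv b ∘ f = (f ⊠ vid (vI V)) ∘ vrhoinv a.
Proof.
  apply: (iso_cancel_l (rhoK b)).
  by rewrite -!assoc rhoVK id_l vrho_nat assoc rhoVK id_r.
Qed.

Lemma tens_split_l {a b c d : bcat V} (f : vHom a b) (g : vHom c d) :
  f ⊠ g = (f ⊠ vid d) ∘ (vid a ⊠ g).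
Proof. by rewrite -tens_comp id_l id_r. Qed.

Lemma tens_split_r {a b c d : bcat V} (f : vHom a b) (g : vHom c d) :
  f ⊠ g = (vid b ⊠ g) ∘ (f ⊠ vid c).
Proof. by rewrite -tens_comp id_l id_r. Qed.

Lemma tens_comp_r {a b c d : bcat V} (f : vHom a b) (g : vHom b c) :
  (vid d ⊠ g) ∘ (vid d ⊠ f) = vid d ⊠ (g ∘ f).
Proof. by rewrite -tens_comp id_l. Qed.

Lemma tens_comp_l {a b c d : bcat V} (f : vHom a b) (g : vHom b c) :
  (g ⊠ vid d) ∘ (f ⊠ vid d) = (g ∘ f) ⊠ vid d.
Proof. by rewrite -tens_comp id_l. Qed.

Lemma tens_interchange {a a' b b' : bcat V} (f : vHom a a') (g : vHom b b') :
  (vid a' ⊠ g) ∘ (f ⊠ vid b) = (f ⊠ vid b') ∘ (vid a ⊠ g).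
Proof. by rewrite -!tens_comp !id_l !id_r. Qed.

Lemma unit_tens_inj {a b : bcat V} (f g : vHom a b) :
  vid (vI V) ⊠ f = vid (vI V) ⊠ g -> f = g.
Proof. by move=> E; apply: (iso_cancel_r (lamVK a)); rewrite -vlam_nat E vlam_nat. Qed.

Lemma tens_unit_inj {a b : bcat V} (f g : vHom a b) :
  f ⊠ vid (vI V) = g ⊠ vid (vI V) -> f = g.
Proof. by move=> E; apply: (iso_cancel_r (rhoVK a)); rewrite -vrho_nat E vrho_nat. Qed.

(* Kelly's coherence lemmas: λ and ρ are compatible with α, and λ_I = ρ_I. *)
Lemma vlam_tens (a b : bcat V) :
  vlam (a ⊗ b) ∘ valpha (vI V) a b = vlam a ⊠ vid b.
Proof.
  apply: unit_tens_inj.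
  set P := valpha (vI V) (vI V ⊗ a) b ∘ (valpha (vI V) (vI V) a ⊠ vid b).
  have HP : P ∘ ((valphainv _ _ _ ⊠ vid b) ∘ valphainv _ _ _) = vid _.
  { rewrite /P. reassoc. arw tens_comp_l. by rewrite alphaVK tens_id id_l alphaVK. }
  apply: (iso_cancel_r HP). rewrite /P -tens_comp_r. reassoc.
  arw (vpentagon (vI V) (vI V) a b). arw (vtriangle (vI V) (a ⊗ b)).
  rewrite -tens_id -valpha_nat. arw (eq_sym (valpha_nat _ _ _)). arw tens_comp_l.
  by rewrite vtriangle.
Qed.

Lemma vrho_tens (a b : bcat V) :
  (vid a ⊠ vrho b) ∘ valpha a b (vI V) = vrho (a ⊗ b).
Proof.
  apply: tens_unit_inj. rewrite -tens_comp_l. apply: (iso_cancel_l (alphaK a b (vI V))).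
  arw valpha_nat. rewrite -(vtriangle b (vI V)) -tens_comp_r. reassoc.
  arw (vpentagon a b (vI V) (vI V)). arw (eq_sym (valpha_nat _ _ _)).
  rewrite tens_id. by arw vtriangle.
Qed.

Lemma vlam_unit : vlam (vI V) = vrho (vI V).
Proof.
  have E : vlam (vI V ⊗ vI V) = vid (vI V) ⊠ vlam (vI V).
  { apply: (iso_cancel_l (lamK (vI V))). by rewrite vlam_nat. }
  apply: tens_unit_inj. by rewrite -vlam_tens -vtriangle E.
Qed.

Lemma vlaminv_unit : vlaminv (vI V) = vrhoinv (vI V).
Proof. apply: (iso_cancel_l (lamK (vI V))). by rewrite lamVK vlam_unit rhoVK. Qed.

Lemma vlam_tens' (a b : bcat V) :
  (vlam a ⊠ vid b) ∘ valphainv (vI V) a b = vlam (a ⊗ b).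
Proof. by rewrite -vlam_tens assoc alphaVK id_r. Qed.

Lemma vlaminv_tens (a b : bcat V) :
  valpha (vI V) a b ∘ (vlaminv a ⊠ vid b) = vlaminv (a ⊗ b).
Proof.
  apply: (iso_cancel_l (lamK (a ⊗ b))).
  rewrite lamVK. arw vlam_tens. arw tens_comp_l. by rewrite lamVK tens_id.
Qed.

Lemma vrhoinv_tens (a b : bcat V) :
  valphainv a b (vI V) ∘ (vid a ⊠ vrhoinv b) = vrhoinv (a ⊗ b).
Proof.
  apply: (iso_cancel_l (rhoK (a ⊗ b))). rewrite rhoVK -vrho_tens. reassoc.
  arw alphaVK. rewrite id_l. arw tens_comp_r. by rewrite rhoVK tens_id.
Qed.

Lemma vrho_tens' (a b : bcat V) :
  vid a ⊠ vrho b = vrho (a ⊗ b) ∘ valphainv a b (vI V).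
Proof. by rewrite -vrho_tens assoc alphaVK id_r. Qed.

Lemma vlaminv_tens' (a b : bcat V) :
  vlaminv a ⊠ vid b = valphainv (vI V) a b ∘ vlaminv (a ⊗ b).
Proof. by rewrite -vlaminv_tens -assoc alphaK id_l. Qed.

Lemma vrhoinv_tens' (a b : bcat V) :
  vid a ⊠ vrhoinv b = valpha a b (vI V) ∘ vrhoinv (a ⊗ b).
Proof. by rewrite -vrhoinv_tens -assoc alphaVK id_l. Qed.

Lemma vtriangle_inv (a b : bcat V) :
  (vrho a ⊠ vid b) ∘ valphainv a (vI V) b = vid a ⊠ vlam b.
Proof. by rewrite -vtriangle assoc alphaVK id_r. Qed.

Lemma vbraid_unit (a : bcat V) : vbraid a (vI V) = vlaminv a ∘ vrho a.
Proof.
  suff BU : vlam a ∘ vbraid a (vI V) = vrho a by rewrite -BU -assoc lamK id_l.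
  apply: tens_unit_inj. apply: (iso_cancel_l (braidK a (vI V))). symmetry.
  rewrite -(vtriangle a (vI V)). reassoc. arw (vbraid_nat (vid a) (vlam (vI V))).
  rewrite -(vlam_tens (vI V) a). reassoc.
  arw vhexagon. arw vlam_nat. arw (vlam_tens a (vI V)). by arw tens_comp_l.
Qed.

Lemma vpentagon_inv2 (a b c d : bcat V) :
  valphainv a b (c ⊗ d) ∘ (vid a ⊠ valpha b c d)
  = valpha (a ⊗ b) c d ∘ ((valphainv a b c ⊠ vid d) ∘ valphainv a (b ⊗ c) d).
Proof.
  have HP : (valpha a (b ⊗ c) d ∘ (valpha a b c ⊠ vid d))
            ∘ ((valphainv a b c ⊠ vid d) ∘ valphainv a (b ⊗ c) d) = vid _.
  { reassoc. arw tens_comp_l. by rewrite alphaVK tens_id id_l alphaVK. }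
  apply: (iso_cancel_r HP). reassoc. arw vpentagon. arw alphaK. rewrite id_l.
  arw alphaK. rewrite id_l. arw tens_comp_l. by rewrite alphaK tens_id id_r.
Qed.

Lemma vpentagon_inv (a b c d : bcat V) :
  valphainv a (b ⊗ c) d ∘ (vid a ⊠ valphainv b c d)
  = (valpha a b c ⊠ vid d) ∘ (valphainv (a ⊗ b) c d ∘ valphainv a b (c ⊗ d)).
Proof.
  have HP : (vid a ⊠ valpha b c d) ∘ (vid a ⊠ valphainv b c d) = vid _
    by rewrite tens_comp_r alphaVK tens_id.
  apply: (iso_cancel_r HP). reassoc. arw tens_comp_r. rewrite alphaK tens_id id_r.
  arw vpentagon_inv2. arw alphaK. rewrite id_l. arw tens_comp_l.
  by rewrite alphaVK tens_id id_l.
Qed.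

Lemma vmid_nat_l {a a' : bcat V} (b c d : bcat V) (f : vHom a a') :
  vmid a' b c d ∘ ((f ⊠ vid b) ⊠ vid (c ⊗ d))
  = ((f ⊠ vid c) ⊠ vid (b ⊗ d)) ∘ vmid a b c d.
Proof.
  rewrite /vmid. reassoc. rewrite -(tens_id c d). arw valpha_nat. rewrite !tens_id.
  arw tens_interchange. rewrite -(tens_id c (b ⊗ d)). by arw valphainv_nat.
Qed.

Lemma vmid_counit {a b c d e : bcat V} (u : vHom a (vI V)) (h : vHom (b ⊗ d) e) :
  ((vlam c ∘ (u ⊠ vid c)) ⊠ h) ∘ vmid a b c d
  = (vid c ⊠ h) ∘ (valpha c b d ∘ ((vbraid b c ⊠ vid d) ∘ (valphainv b c d
      ∘ ((vlam b ∘ (u ⊠ vid b)) ⊠ vid (c ⊗ d))))).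
Proof.
  rewrite /vmid. reassoc.
  arwl (tens_split_r (vlam c ∘ (u ⊠ vid c)) h). arwl (eq_sym (tens_comp_l _ _)).
  arwl (eq_sym (valphainv_nat _ _ _)). rewrite tens_id. arwl vlam_tens'.
  arwl (eq_sym (tens_interchange _ _)). arwl vlam_nat.
  rewrite -(tens_id b (c ⊗ d)). arwl (eq_sym (valpha_nat _ _ _)). arwl vlam_tens.
  by arwl tens_comp_l.
Qed.

End Coherence.

(* A Hopf monoid (A, m, j, δ, ε, S) in V with a left integral t; only the
   axioms actually needed are assumed.  All equations are stated with
   composites associated to the right. *)
Section HopfMonoid.
Context {V : BMC}.
Variables (A : bcat V) (m : vHom (A ⊗ A) A) (j : vHom (vI V) A)
  (δ : vHom A (A ⊗ A)) (ε : vHom A (vI V)) (S : vHom A A) (t : vHom (vI V) A).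

Hypothesis mul_assoc : m ∘ (m ⊠ vid A) = m ∘ ((vid A ⊠ m) ∘ valpha A A A).
Hypothesis mul_unit_l : m ∘ (j ⊠ vid A) = vlam A.
Hypothesis mul_unit_r : m ∘ (vid A ⊠ j) = vrho A.
Hypothesis comul_coassoc : valpha A A A ∘ ((δ ⊠ vid A) ∘ δ) = (vid A ⊠ δ) ∘ δ.
Hypothesis comul_counit_l : vlam A ∘ ((ε ⊠ vid A) ∘ δ) = vid A.
Hypothesis comul_counit_r : vrho A ∘ ((vid A ⊠ ε) ∘ δ) = vid A.
Hypothesis comul_mul : δ ∘ m = (m ⊠ m) ∘ (vmid A A A A ∘ (δ ⊠ δ)).
Hypothesis antipode_l : m ∘ ((S ⊠ vid A) ∘ δ) = j ∘ ε.
Hypothesis integral_l : m ∘ ((vid A ⊠ t) ∘ vrhoinv A) = t ∘ ε.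

Lemma integral_absorbs :
  (vid A ⊠ t) ∘ vrhoinv A = (vid A ⊠ (m ∘ ((vid A ⊠ t) ∘ vrhoinv A))) ∘ δ.
Proof.
  rewrite integral_l -tens_comp_r. reassoc.
  by rewrite -{1}(id_l (vid A ⊠ ε ∘ δ)) -(rhoK A) !assoc comul_counit_r id_r.
Qed.

(* Expanding a ⊗ t by
   [integral_absorbs] and δ(a_(2) t) by multiplicativity, the left side becomes
   S(a_(1)) a_(2) t_(1) ⊗ a_(3) t_(2); the antipode and counit laws reduce it. *)
Lemma antipode_integral_swap :
  (m ⊠ vid A) ∘ (valphainv A A A ∘ ((S ⊠ (δ ∘ t)) ∘ vrhoinv A))
  = (vid A ⊠ m) ∘ (valpha A A A ∘ ((vbraid A A ⊠ vid A)
      ∘ (valphainv A A A ∘ ((vid A ⊠ (δ ∘ t)) ∘ vrhoinv A)))).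
Proof.
  arwl (tens_split_l S (δ ∘ t)). arwl (eq_sym (tens_comp_r t δ)).
  arwl integral_absorbs. arwl tens_comp_r.
  arwl comul_mul. arwl (eq_sym (tens_comp (vid A) δ t δ)). rewrite (id_r δ).
  do 3 arwl (eq_sym (tens_comp_r _ _)).
  arwl (eq_sym (tens_split_l S (m ⊠ m))). arwl valphainv_nat.
  arwl (eq_sym (tens_comp (S ⊠ m) m m (vid A))). rewrite (id_l m).
  do 2 arwl (eq_sym (tens_comp_r _ _)).
  arwl vpentagon_inv.
  arwl (eq_sym (tens_comp (valpha A A A) (m ∘ (S ⊠ m)) (vid (A ⊗ A)) m)).
  rewrite (id_r m).
  have reassoc_mul : m ∘ ((S ⊠ m) ∘ valpha A A A) = m ∘ ((m ∘ (S ⊠ vid A)) ⊠ vid A).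
  { rewrite (tens_split_r S m). reassoc. rewrite -(tens_id A A).
    arw (eq_sym (valpha_nat _ _ _)). arw (eq_sym mul_assoc). by arw tens_comp_l. }
  rewrite reassoc_mul. arwl tens_comp_r. arwl tens_comp_r.
  arwl (eq_sym (tens_comp_r ((δ ⊠ (δ ∘ t)) ∘ vrhoinv A) (valpha A A (A ⊗ A)))).
  arwl (eq_sym (tens_comp_r (vrhoinv A) (δ ⊠ (δ ∘ t)))).
  arwl valphainv_nat. rewrite (tens_id A A). arwl vpentagon_inv2. arwl valphainv_nat.
  arwl vrhoinv_tens. arwl (vrhoinv_nat δ).
  arwl (eq_sym (tens_comp δ (vid A ⊠ δ) (vid (vI V)) (δ ∘ t))). rewrite (id_r t).
  arwl (eq_sym (tens_comp (vid A ⊠ δ ∘ δ) (valphainv A A A) (δ ∘ t) (vid (A ⊗ A)))).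
  rewrite (id_l (δ ∘ t)) -comul_coassoc. reassoc. arw alphaK. rewrite id_l.
  have mid_nat := vmid_nat_l A A A δ. rewrite /vmid in mid_nat.
  repeat rewrite assoc in mid_nat.
  have split_first : ((δ ⊠ vid A) ∘ δ) ⊠ (δ ∘ t)
                     = ((δ ⊠ vid A) ⊠ vid (A ⊗ A)) ∘ (δ ⊠ (δ ∘ t))
    by rewrite -tens_comp id_l.
  rewrite split_first. reassoc. arwl mid_nat.
  arwl (eq_sym (tens_comp (δ ⊠ vid A) (m ∘ ((m ∘ (S ⊠ vid A)) ⊠ vid A)) (vid (A ⊗ A)) m)).
  rewrite (id_r m). arw tens_comp_l. rewrite antipode_l -tens_comp_l. arw mul_unit_l.
  have counit_mid := @vmid_counit _ A A A A A ε m. rewrite /vmid in counit_mid.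
  repeat rewrite assoc in counit_mid.
  arwl counit_mid.
  arwl (eq_sym (tens_comp δ (vlam A ∘ (ε ⊠ vid A)) (δ ∘ t) (vid (A ⊗ A)))).
  by rewrite id_l comul_counit_l.
Qed.

(* If (1 ⊗ f) δ t = j and (g ⊗ 1) δ t = j, then g ∘ S = f:
   g(S(a)) = g(S(a) t_(1)) f(t_(2)) = g(t_(1)) f(a t_(2)) = f(a). *)
Lemma antipode_integral_functionals (f g : vHom A (vI V)) :
  vrho A ∘ ((vid A ⊠ f) ∘ (δ ∘ t)) = j ->
  vlam A ∘ ((g ⊠ vid A) ∘ (δ ∘ t)) = j ->
  g ∘ S = f.
Proof.
  move=> Hf Hg.
  have S_unit : S = m ∘ ((S ⊠ j) ∘ vrhoinv A).
  { rewrite (tens_split_r S j). reassoc. arw mul_unit_r. arw vrho_nat.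
    by rewrite rhoVK id_r. }
  rewrite {1}S_unit -{1}Hf.
  have expand : S ⊠ (vrho A ∘ ((vid A ⊠ f) ∘ (δ ∘ t)))
       = (vid A ⊠ vrho A) ∘ ((vid A ⊠ (vid A ⊠ f)) ∘ (S ⊠ (δ ∘ t)))
    by rewrite -!tens_comp !id_l.
  rewrite expand vrho_tens'. reassoc. arw (eq_sym (vrho_nat m)). arw valphainv_nat.
  rewrite (tens_id A A).
  arw (eq_sym (tens_comp (vid (A ⊗ A)) m f (vid (vI V)))).
  rewrite (id_r m) (id_l f) (tens_split_r m f). reassoc.
  arw antipode_integral_swap.
  arw (eq_sym (vrho_nat g)). arw tens_comp_r. arw (eq_sym (tens_interchange g (f ∘ m))).
  rewrite -(tens_id A A). arw (eq_sym (valpha_nat _ _ _)). arw tens_comp_l.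
  arw (eq_sym (vbraid_nat (vid A) g)). rewrite vbraid_unit. reassoc.
  rewrite -tens_comp_l. reassoc. arw vlaminv_tens. rewrite -vlam_unit. arw vlam_nat.
  arw lamVK. rewrite id_l -tens_comp_l. reassoc.
  arw (eq_sym (valphainv_nat _ _ _)). arw vtriangle_inv. arw tens_comp_r. arw tens_comp_r.
  rewrite Hg. arw mul_unit_r. by rewrite rhoVK id_r.
Qed.

End HopfMonoid.

Definition functional_l {V : BMC} {a : bcat V} (φ : vHom (vI V) (vdual a))
  : vHom a (vI V) := vev a ∘ (φ ⊠ vid a) ∘ vlaminv a.

Definition functional_r {V : BMC} {a : bcat V} (φ : vHom (vI V) (vdual a))
  : vHom a (vI V) := vev a ∘ vbraid a (vdual a) ∘ (vid a ⊠ φ) ∘ vrhoinv a.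

Section PairingFormulas.
Context {V : BMC} (H : HopfData V) (t : forall x y : hX H, vHom (vI V) (hA H x y)).

Lemma p_map_global (x y : hX H) (φ : vHom (vI V) (vdual (hA H x y))) :
  p_map t x y ∘ φ
  = vlam (hA H x y) ∘ (functional_l φ ⊠ vid (hA H x y)) ∘ hdelta H x y ∘ t x y.
Proof.
  rewrite /p_map /functional_l. reassoc.
  arwr (eq_sym (tens_comp_l _ _)). arwr (eq_sym (tens_comp_l _ _)).
  arwr vlaminv_tens'. arwr (vlaminv_nat (hdelta H x y)). arwr (vlaminv_nat (t x y)).
  arwr (eq_sym (valphainv_nat φ (vid _) (vid _))). rewrite tens_id vlaminv_unit.
  arwr (eq_sym (tens_interchange _ _)). arwr (eq_sym (tens_interchange _ _)).
  by arwl (vrhoinv_nat φ).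
Qed.

Lemma q_map_global (x y : hX H) (φ : vHom (vI V) (vdual (hA H x y))) :
  q_map t x y ∘ φ
  = vrho (hA H x y) ∘ (vid (hA H x y) ⊠ functional_r φ) ∘ hdelta H x y ∘ t x y.
Proof.
  rewrite /q_map /functional_r. reassoc.
  arwr (eq_sym (tens_comp_r _ _)). arwr (eq_sym (tens_comp_r _ _)).
  arwr (eq_sym (tens_comp_r _ _)).
  arwr vrhoinv_tens'. arwr (vrhoinv_nat (hdelta H x y)). arwr (vrhoinv_nat (t x y)).
  arwr (eq_sym (valpha_nat (vid _) (vid _) φ)). rewrite tens_id -vlaminv_unit.
  arwr (tens_interchange _ _). arwr (tens_interchange _ _).
  by arwl (vlaminv_nat φ).
Qed.

End PairingFormulas.

(* At each object x the structure maps of a Hopf V-category with left integral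
   family t form a Hopf monoid with left integral, so the preceding section
   applies to A = H_{x,x}. *)
Lemma integral_functionals_antipode {V : BMC} (H : HopfData V)
  (HH : is_Hopf_Vcategory H) (t : forall x y : hX H, vHom (vI V) (hA H x y))
  (Ht : left_integral t) (x : hX H) (f g : vHom (hA H x x) (vI V)) :
  vrho (hA H x x) ∘ (vid (hA H x x) ⊠ f) ∘ hdelta H x x ∘ t x x = hj H x ->
  vlam (hA H x x) ∘ (g ⊠ vid (hA H x x)) ∘ hdelta H x x ∘ t x x = hj H x ->
  g ∘ hs H x x = f.
Proof.
  move: HH => [[Hass [HUL HUR]] [[Hcoass [HCL [HCR [HDm _]]]] Hant]] Hf Hg.
  apply: (antipode_integral_functionals (hA H x x) (hm H x x x) (hj H x)
            (hdelta H x x) (heps H x x) (hs H x x) (t x x)).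
  - by rewrite -assoc; apply: Hass.
  - exact: HUL.
  - exact: HUR.
  - by rewrite -assoc; apply: Hcoass.
  - by rewrite -assoc; apply: HCL.
  - by rewrite -assoc; apply: HCR.
  - by rewrite -assoc; apply: HDm.
  - by rewrite -assoc; apply: (proj2 (Hant x x)).
  - by rewrite -assoc; apply: Ht.
  - by rewrite -!assoc.
  - by rewrite -!assoc.
Qed.

(* The first claim follows from [integral_functionals_antipode] by composing
   with S⁻¹; the second is its instance for the functionals |p̄ j⟩ and ⟨q̄ j|,
   which satisfy the hypotheses by [p_map_global] and [q_map_global]. *)
Theorem mainTheorem3 (V : BMC) (H : HopfData V)
  (HH : is_Hopf_Vcategory H)
  (sinv : forall x y : hX H, vHom (hA H y x) (hA H x y))
  (Hsinv : is_antipode_inverse sinv)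
  (t : forall x y : hX H, vHom (vI V) (hA H x y))
  (Ht : left_integral t) (Hns : non_singular t)
  (x : hX H) (f g : vHom (hA H x x) (vI V))
  (Hf : vrho (hA H x x) ∘ (vid (hA H x x) ⊠ f) ∘ hdelta H x x ∘ t x x = hj H x)
  (Hg : vlam (hA H x x) ∘ (g ⊠ vid (hA H x x)) ∘ hdelta H x x ∘ t x x = hj H x) :
  g = f ∘ sinv x x
  /\ (forall (pbar qbar : vHom (hA H x x) (vdual (hA H x x))),
        p_map t x x ∘ pbar = vid (hA H x x) ->
        q_map t x x ∘ qbar = vid (hA H x x) ->
        vev (hA H x x) ∘ (pbar ⊠ vid (hA H x x)) ∘ (hj H x ⊠ vid (hA H x x))
          ∘ vlaminv (hA H x x)
        = vev (hA H x x) ∘ vbraid (hA H x x) (vdual (hA H x x))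
          ∘ (vid (hA H x x) ⊠ qbar) ∘ (vid (hA H x x) ⊠ hj H x)
          ∘ vrhoinv (hA H x x) ∘ sinv x x).
Proof.
  have twisted : forall f' g' : vHom (hA H x x) (vI V),
      vrho (hA H x x) ∘ (vid (hA H x x) ⊠ f') ∘ hdelta H x x ∘ t x x = hj H x ->
      vlam (hA H x x) ∘ (g' ⊠ vid (hA H x x)) ∘ hdelta H x x ∘ t x x = hj H x ->
      g' = f' ∘ sinv x x.
  { move=> f' g' Hf' Hg'.
    by rewrite -(integral_functionals_antipode _ HH _ Ht _ _ _ Hf' Hg') assoc (proj1 (Hsinv x x)) id_r. }
  split; first exact: twisted.
  move=> pbar qbar Hp Hq.
  have := twisted (functional_r (qbar ∘ hj H x)) (functional_l (pbar ∘ hj H x)).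
  rewrite -q_map_global -p_map_global -!assoc Hp Hq !id_l.
  move=> /(_ eq_refl eq_refl).
  by rewrite /functional_l /functional_r -tens_comp_l -tens_comp_r !assoc => ->.
Qed.
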